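(* Let $[0,1,\dots,k]$ be a hierarchical-leadership flock, and let $x_i,v_i:[0,\infty)\to\mathbb{R}^3$ ($0\le i\le k$) satisfy \[\dot x_i=v_i,\qquad \dot v_i=\sum_{j\in\mathcal{L}(i)}a_{ij}(x)(v_j-v_i),\qquad i=1,\dots,k,\] \[\dot x_0=v_0,\qquad \dot v_0=f(t),\qquad t>0,\] with $a_{ij}(x)=H/(1+|x_i-x_j|^2)^{\beta}$ for $j\in\mathcal{L}(i)$, where $H>0$ and $0<\beta<1/2$, and $|f(t)|=O((1+t)^{-\mu})$ with $\mu>k+1$. Then there exist constant vectors $d_{ij}\in\mathbb{R}^3$, $0\le i,j\le k$, such that \[\lim_{t\to\infty}\big(x_i(t)-x_j(t)\big)=d_{ij}\quad\text{for all }0\le i,j\le k,\] with convergence rate $O\big((1+t)^{-(\mu-k-1)}\big)$.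
   Context: A flock $[0,1,\dots,k]$ is under hierarchical leadership if $j\in\mathcal{L}(i)$ (agent $i$ is led by agent $j$) only if $j<i$, and every agent $i>0$ has a nonempty leader set $\mathcal{L}(i)$. *)

From HB Require Import structures.
From mathcomp Require Import all_boot all_order all_algebra.
From mathcomp Require Import all_classical all_reals all_analysis.
Set Implicit Arguments. Unset Strict Implicit. Unset Printing Implicit Defensive.
Import Order.TTheory GRing.Theory Num.Theory.
Import numFieldNormedType.Exports.
Local Open Scope ring_scope.

Definition sqnorm3 {R : realType} (u : 'rV[R]_3) : R := \sum_(c < 3) u 0 c ^+ 2.

Definition enorm3 {R : realType} (u : 'rV[R]_3) : R := Num.sqrt (sqnorm3 u).

(* Hierarchical leadership of the flock [0,1,...,k]: L i j means "agent i is
   led by agent j", i.e. j \in L(i). *)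
Definition hierarchical_leadership (k : nat) (L : 'I_k.+1 -> 'I_k.+1 -> bool) : Prop :=
  (forall i j : 'I_k.+1, L i j -> (j < i)%N) /\
  (forall i : 'I_k.+1, (0 < i)%N -> exists j, L i j).

Definition cs_weight {R : realType} (H beta : R) (xi xj : 'rV[R]_3) : R :=
  H / (1 + sqnorm3 (xi - xj)) `^ beta.

(* The leader's acceleration f is integrable with tail (1+t)^(1-mu), so its velocity
   converges to some v_inf at that rate.  The rate then propagates down the hierarchy
   without loss.  Let i be a follower all of whose leaders j satisfy
   |v_j - v_inf| <= C (1+t)^(-q), and fix one leader j0.  The Lyapunov function
   D = |v_i - v_inf|^2 satisfies D' <= sum_j a_ij (|v_j - v_inf|^2 - D), so D stays
   bounded, |x_i - x_j0| grows at most linearly and a_ij0 >= c (1+t)^(-2 beta).  As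
   2 beta < 1, this coupling eventually dominates 2q/(1+t), the logarithmic decay rate
   of (1+t)^(-2q), and a barrier argument gives D <= M (1+t)^(-2q).  Hence all relative
   velocities decay like (1+t)^(1-mu), which is integrable because mu > 2 as soon as
   there are two agents, and the relative positions converge at rate (1+t)^(2-mu). *)

From HB Require Import structures.
From mathcomp Require Import all_boot all_order all_algebra.
From mathcomp Require Import all_classical all_reals all_analysis.
From mathcomp Require Import ring lra.
Set Implicit Arguments. Unset Strict Implicit. Unset Printing Implicit Defensive.
Import Order.TTheory GRing.Theory Num.Theory.
Import numFieldNormedType.Exports.
Local Open Scope classical_set_scope.
Local Open Scope ring_scope.

Section RealComparison.
Context {R : realType}.
Implicit Types (a b s t : R) (phi dphi : R -> R).

Lemma is_derive_within_continuous phi dphi a s t :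
  (forall u, a <= u -> is_derive u 1 phi (dphi u)) -> a <= s ->
  {within `[s, t], continuous phi}.
Proof.
move=> dphiP aS; apply: derivable_within_continuous => u.
by rewrite in_itv /= => /andP[su _]; case: (dphiP u (le_trans aS su)).
Qed.

Lemma is_derive_MVT phi dphi a s t :
  (forall u, a <= u -> is_derive u 1 phi (dphi u)) -> a <= s -> s < t ->
  exists2 c, s < c < t & phi t - phi s = dphi c * (t - s).
Proof.
move=> dphiP aS st.
have dphi_in u : u \in `]s, t[ -> is_derive u 1 phi (dphi u).
  by rewrite in_itv /= => /andP[/ltW su _]; apply: dphiP (le_trans aS su).
have [c] := MVT st dphi_in (is_derive_within_continuous dphiP aS).
by rewrite in_itv /=; exists c.
Qed.

Lemma last_le0_point phi a b :
  a <= b -> (forall s, a <= s -> {for s, continuous phi}) -> phi a <= 0 ->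
  exists2 s, a <= s <= b & phi s <= 0 /\ forall y, s < y <= b -> 0 < phi y.
Proof.
move=> ab phi_cont phia.
pose S := [set s | a <= s <= b /\ phi s <= 0].
have Sa : S a by rewrite /S /= lexx ab.
have ubS : ubound S b by move=> s [/andP[_ ->]].
have supS : has_sup S by split; [exists a | exists b].
have aS : a <= sup S := sup_upper_bound supS Sa.
have Sb : sup S <= b by apply: ge_sup; first exists a.
exists (sup S); first by rewrite aS Sb.
split; last first.
  move=> y /andP[Sy yb]; rewrite ltNge; apply/negP => phiy.
  have : y <= sup S.
    by apply: (sup_upper_bound supS); rewrite /S /= yb (le_trans aS (ltW Sy)).
  by rewrite leNgt Sy.
rewrite leNgt; apply/negP => phiS.
have [e e0 phi_near] := (nbhs_ballP _ _).1 (cvgr_gt _ (phi_cont _ aS) _ phiS).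
have [y Sy ltSy] := sup_adherent e0 supS.
have yS : y <= sup S := sup_upper_bound supS Sy.
case: Sy => _ phiy.
suff : 0 < phi y by rewrite ltNge phiy.
apply: phi_near; rewrite /ball /= ger0_norm ?subr_ge0 //.
by rewrite ltrBlDr addrC -ltrBlDr.
Qed.

Lemma nonpos_barrier phi dphi a :
  (forall t, a <= t -> is_derive t 1 phi (dphi t)) -> phi a <= 0 ->
  (forall t, a <= t -> 0 < phi t -> dphi t <= 0) ->
  forall t, a <= t -> phi t <= 0.
Proof.
move=> dphiP phia dphi_le0 t aT; rewrite leNgt; apply/negP => phit.
have phi_cont s : a <= s -> {for s, continuous phi}.
  move=> aS; apply: differentiable_continuous; apply/derivable1_diffP.
  by case: (dphiP s aS).
have [s /andP[aS st] [phis phi_pos]] := last_le0_point aT phi_cont phia.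
have {}st : s < t by rewrite lt_neqAle st andbT; apply: contraTneq phit => <-; rewrite -leNgt.
have [c /andP[sc ct] phi_diff] := is_derive_MVT dphiP aS st.
have phic : 0 < phi c by apply: phi_pos; rewrite sc ltW.
have : phi t <= phi s.
  rewrite -subr_le0 phi_diff mulr_le0_ge0 //; last by rewrite subr_ge0 ltW.
  exact: dphi_le0 (le_trans aS (ltW sc)) phic.
by move=> /le_trans /(_ phis); rewrite leNgt phit.
Qed.

Lemma is_derive_ge0_ndecr phi dphi a :
  (forall t, a <= t -> is_derive t 1 phi (dphi t)) ->
  (forall t, a <= t -> 0 <= dphi t) ->
  forall s t, a <= s -> s <= t -> phi s <= phi t.
Proof.
move=> dphiP dphi_ge0 s t aS; rewrite le_eqVlt => /predU1P[-> // | st].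
have [c /andP[sc _] phi_diff] := is_derive_MVT dphiP aS st.
rewrite -subr_ge0 phi_diff mulr_ge0 //; last by rewrite subr_ge0 ltW.
exact: dphi_ge0 (le_trans aS (ltW sc)).
Qed.

Lemma is_derive_bounded_lipschitz phi dphi a V :
  (forall t, a <= t -> is_derive t 1 phi (dphi t)) ->
  (forall t, a <= t -> `|dphi t| <= V) ->
  forall t, a <= t -> `|phi t - phi a| <= V * (t - a).
Proof.
move=> dphiP dphi_le t; rewrite le_eqVlt => /predU1P[<- | aT].
  by rewrite !subrr normr0 mulr0.
have [c /andP[ac _] ->] := is_derive_MVT dphiP (lexx a) aT.
have tpos : 0 <= t - a by rewrite subr_ge0 ltW.
by rewrite normrM (ger0_norm tpos) ler_wpM2r // dphi_le // ltW.
Qed.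

End RealComparison.

Section PowerDecay.
Context {R : realType}.
Implicit Types (a p q t : R).

Lemma is_derive_powR_shift q t : -1 < t ->
  is_derive t 1 (fun s => (1 + s) `^ q) (q * (1 + t) `^ (q - 1)).
Proof.
move=> t1; have pos : 0 < 1 + t by lra.
have dshift : is_derive t 1 (fun s : R => 1 + s) 1.
  rewrite [X in is_derive _ _ X](_ : _ = cst 1 + id); last exact/funext.
  by apply: is_derive_eq; rewrite add0r.
have := is_derive1_comp (is_derive1_powR q pos) dshift.
by rewrite mulr1.
Qed.

Lemma is_derive_decay_limit (y dy : R -> R) a C p : -1 < a -> 1 < p ->
  (forall t, a <= t -> is_derive t 1 y (dy t)) ->
  (forall t, a <= t -> `|dy t| <= C * (1 + t) `^ (- p)) ->
  exists l, forall t, a <= t -> `|y t - l| <= C / (p - 1) * (1 + t) `^ (1 - p).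
Proof.
move=> a1 p1 dyP dy_le.
pose g u := C / (p - 1) * (1 + u) `^ (1 - p).
have C0 : 0 <= C.
  have := le_trans (normr_ge0 _) (dy_le a (lexx a)).
  by rewrite pmulr_lge0 // powR_gt0 //; lra.
have g0 u : 0 <= g u by rewrite mulr_ge0 ?powR_ge0 // divr_ge0 // subr_ge0 ltW.
have dg u : a <= u -> is_derive u 1 g (- (C * (1 + u) `^ (- p))).
  move=> au; have := is_derive_powR_shift (1 - p) (lt_le_trans a1 au).
  rewrite (_ : g = C / (p - 1) *: (fun s => (1 + s) `^ (1 - p))); last exact/funext.
  move=> dpow; apply: is_derive_eq.
  rewrite (_ : 1 - p - 1 = - p); last by ring.
  by rewrite [LHS]mulrA -mulNr; congr (_ * _); field; rewrite subr_eq0 gt_eqF.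
have dy_bounds u : a <= u ->
    - (C * (1 + u) `^ (- p)) <= dy u <= C * (1 + u) `^ (- p).
  by move=> au; rewrite -ler_norml dy_le.
have lower_ndecr s t : a <= s -> s <= t -> y s - g s <= y t - g t.
  apply: (@is_derive_ge0_ndecr _ (y - g) (fun u => dy u + C * (1 + u) `^ (- p))).
    move=> u au; have dyu := dyP u au; have dgu := dg u au.
    by apply: is_derive_eq; rewrite opprK.
  by move=> u /dy_bounds /andP[+ _]; rewrite -subr_ge0 opprK.
have upper_nincr s t : a <= s -> s <= t -> y t + g t <= y s + g s.
  move=> aS st; rewrite -lerN2.
  apply: (@is_derive_ge0_ndecr _ (- (y + g))
    (fun u => - dy u + C * (1 + u) `^ (- p)) a) => //.
    move=> u au; have dyu := dyP u au; have dgu := dg u au.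
    by apply: is_derive_eq; rewrite opprD opprK.
  by move=> u /dy_bounds /andP[_]; rewrite -subr_ge0 addrC.
have lower_le_upper u : y u - g u <= y u + g u.
  by rewrite lerD2l -subr_ge0 opprK addr_ge0.
pose S := [set y u - g u | u in [set u | a <= u]].
have supS : has_sup S.
  split; first by exists (y a - g a), a => /=.
  exists (y a + g a) => _ [u au <-].
  exact: le_trans (lower_le_upper u) (upper_nincr _ _ (lexx a) au).
exists (sup S) => t aT.
have lo : y t - g t <= sup S by apply: (sup_upper_bound supS); exists t.
have hi : sup S <= y t + g t.
  apply: ge_sup; first by exists (y a - g a), a => /=.
  move=> _ [u au <-]; have [ut|tu] := leP u t.
    exact: le_trans (lower_ndecr _ _ au ut) (lower_le_upper t).
  exact: le_trans (lower_le_upper u) (upper_nincr _ _ aT (ltW tu)).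
by rewrite ler_norml; apply/andP; split; rewrite /g in lo hi; lra.
Qed.

Lemma powR_shift_unbounded K q : 0 < q ->
  exists2 T, 0 <= T & forall t, T <= t -> K <= (1 + t) `^ q.
Proof.
move=> q0; exists (`|K| `^ q^-1) => [|t Tt]; first exact: powR_ge0.
apply: le_trans (ler_norm K) _.
have -> : `|K| = (`|K| `^ q^-1) `^ q by rewrite -powRrM mulVf ?gt_eqF // powRr1.
apply: ge0_ler_powR; rewrite ?nnegrE ?powR_ge0 //; have := powR_ge0 `|K| q^-1; lra.
Qed.

Lemma near_powR_shift_decay_le K q e : 0 < q -> 0 < e ->
  \forall t \near +oo, K * (1 + t) `^ (- q) <= e.
Proof.
move=> q0 e0; have [T T0 growth] := powR_shift_unbounded (K / e) q0.
near=> t; have Tt : T <= t by near: t; apply: nbhs_pinfty_ge; exact: num_real.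
have t0 : 0 < 1 + t by lra.
by rewrite powRN ler_pdivrMr ?powR_gt0 // mulrC -ler_pdivrMr // growth.
Unshelve. all: by end_near.
Qed.

Lemma powR_rate_cvg (V : normedModType R) (h : R -> V) (l : V) K q T : 0 < q ->
  (forall t, T <= t -> `|h t - l| <= K * (1 + t) `^ (- q)) -> h @ +oo --> l.
Proof.
move=> q0 rate; apply/cvgrPdist_le => e e0; near=> t.
rewrite distrC; apply: le_trans (rate t _) _.
  by near: t; apply: nbhs_pinfty_ge; exact: num_real.
by near: t; exact: near_powR_shift_decay_le.
Unshelve. all: by end_near.
Qed.

Lemma sqr_powR a q : 0 <= a -> (a `^ q) ^+ 2 = a `^ (2 * q).
Proof. by move=> a0; rewrite -powR_mulrn ?powR_ge0 // -powRrM mulrC. Qed.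

Lemma sqrt_powR_double a q : 0 <= a -> Num.sqrt (a `^ (2 * q)) = a `^ q.
Proof. by move=> a0; rewrite -sqr_powR // sqrtr_sqr ger0_norm ?powR_ge0. Qed.

End PowerDecay.

Lemma is_derive_coord {R : realType} m n (M : R -> 'M[R]_(m, n)) (dM : 'M[R]_(m, n))
    (t : R) (i : 'I_m) (j : 'I_n) :
  is_derive t 1 M dM -> is_derive t 1 (fun s => M s i j) (dM i j).
Proof.
move=> [dM_ex <-]; have := (derivable_mxP M t 1).1 dM_ex i j.
by move=> dMij; apply: DeriveDef => //; rewrite derive_mx // mxE.
Qed.

Section Euclid3.
Context {R : realType}.
Implicit Types (u w : 'rV[R]_3).

Definition dot3 u w : R := \sum_(c < 3) u 0 c * w 0 c.

Lemma sqnorm3_ge0 u : 0 <= sqnorm3 u.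
Proof. by rewrite sumr_ge0 // => c _; rewrite sqr_ge0. Qed.

Lemma normr_coord_le_sqrt u c B : sqnorm3 u <= B -> `|u 0 c| <= Num.sqrt B.
Proof.
move=> uB; rewrite -sqrtr_sqr ler_sqrt; last exact: le_trans (sqnorm3_ge0 u) uB.
apply: le_trans uB; rewrite /sqnorm3 (bigD1 c) //= lerDl.
by rewrite sumr_ge0 // => j _; rewrite sqr_ge0.
Qed.

Lemma normr_coord_le_enorm3 u c : `|u 0 c| <= enorm3 u.
Proof. exact: normr_coord_le_sqrt. Qed.

Lemma normr_le_enorm3 u : `|u| <= enorm3 u.
Proof.
rewrite [leLHS]/Num.Def.normr /= mx_normrE; apply: bigmax_le; first by rewrite sqrtr_ge0.
by move=> [i c] _; rewrite (ord1 i); exact: normr_coord_le_enorm3.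
Qed.

Lemma sqnorm3_le_sqr u B : enorm3 u <= B -> sqnorm3 u <= B ^+ 2.
Proof.
move=> uB; rewrite -[sqnorm3 u]sqr_sqrtr ?sqnorm3_ge0 //.
by rewrite lerXn2r ?nnegrE ?sqrtr_ge0 ?(le_trans (sqrtr_ge0 _) uB).
Qed.

Lemma enorm3_le_sqrt u B : sqnorm3 u <= B -> enorm3 u <= Num.sqrt B.
Proof. by move=> uB; rewrite ler_sqrt // (le_trans (sqnorm3_ge0 u)). Qed.

Lemma sqnorm3_le_coord u Q : (forall c, `|u 0 c| <= Q) -> sqnorm3 u <= 3 * Q ^+ 2.
Proof.
move=> uQ; apply: (@le_trans _ _ (\sum_(c < 3) Q ^+ 2)).
  apply: ler_sum => c _.
  by rewrite -real_normK ?num_real // lerXn2r ?nnegrE ?(le_trans _ (uQ c)).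
by rewrite sumr_const card_ord mulr_natl.
Qed.

Lemma enorm3_le_coord u Q : (forall c, `|u 0 c| <= Q) -> enorm3 u <= 2 * Q.
Proof.
move=> uQ; have Q0 : 0 <= Q := le_trans (normr_ge0 _) (uQ 0).
rewrite -[2 * Q]ger0_norm ?mulr_ge0 // -sqrtr_sqr ler_sqrt ?sqr_ge0 //.
by apply: le_trans (sqnorm3_le_coord uQ) _; rewrite exprMn ler_wpM2r ?sqr_ge0 //; lra.
Qed.

Lemma enorm3_sub_le u w : enorm3 (u - w) <= 2 * (enorm3 u + enorm3 w).
Proof.
apply: enorm3_le_coord => c; rewrite !mxE; apply: le_trans (ler_normB _ _) _.
by apply: lerD; exact: normr_coord_le_enorm3.
Qed.

Lemma dot3_sumZr (I : finType) (P : pred I) w (a : I -> R) (z : I -> 'rV[R]_3) :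
  dot3 w (\sum_(j | P j) a j *: z j) = \sum_(j | P j) a j * dot3 w (z j).
Proof.
rewrite /dot3 (eq_bigr (fun c => \sum_(j | P j) a j * (w 0 c * z j 0 c))).
  by rewrite exchange_big; apply: eq_bigr => j _; rewrite mulr_sumr.
by move=> c _; rewrite summxE mulr_sumr; apply: eq_bigr => j _; rewrite !mxE mulrCA.
Qed.

Lemma sqnorm3_tangent_le w u : 2 * dot3 w (u - w) <= sqnorm3 u - sqnorm3 w.
Proof.
rewrite /dot3 /sqnorm3 -sumrB mulr_sumr; apply: ler_sum => c _.
by have := sqr_ge0 (u 0 c - w 0 c); rewrite !mxE !expr2; nra.
Qed.

Lemma is_derive_sqnorm3 (W : R -> 'rV[R]_3) dW (t : R) :
  is_derive t 1 W dW -> is_derive t 1 (fun s => sqnorm3 (W s)) (2 * dot3 (W t) dW).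
Proof.
move=> dWP; rewrite (_ : (fun s => _) = \sum_(c < 3) (fun s => W s 0 c) ^+ 2).
  have dcoord c := is_derive_coord 0 c dWP.
  apply: is_derive_eq; rewrite mulr_sumr; apply: eq_bigr => c _.
  by rewrite expr1 mulrA.
by apply/funext => s; rewrite /sqnorm3 fct_sumE.
Qed.

Lemma is_derive_decay_limit3 (w dw : R -> 'rV[R]_3) (a K p : R) : -1 < a -> 1 < p ->
  (forall t, a <= t -> is_derive t 1 w (dw t)) ->
  (forall t, a <= t -> enorm3 (dw t) <= K * (1 + t) `^ (- p)) ->
  exists l, forall t, a <= t -> enorm3 (w t - l) <= 2 * (K / (p - 1)) * (1 + t) `^ (1 - p).
Proof.
move=> a1 p1 dwP dw_le.
have coord c : exists lc, forall t, a <= t ->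
    `|w t 0 c - lc| <= K / (p - 1) * (1 + t) `^ (1 - p).
  apply: (is_derive_decay_limit (dy := fun t => dw t 0 c)) a1 p1 _ _ => t aT.
    exact: is_derive_coord (dwP t aT).
  exact: le_trans (normr_coord_le_enorm3 _ c) (dw_le t aT).
have [l lP] := fin_all_exists coord.
exists (\row_c l c) => t aT; rewrite -mulrA; apply: enorm3_le_coord => c.
by rewrite !mxE; exact: lP.
Qed.

End Euclid3.

Section Weights.
Context {R : realType}.
Implicit Types (H beta : R) (xi xj : 'rV[R]_3).

Lemma cs_weight_ge0 H beta xi xj : 0 <= H -> 0 <= cs_weight H beta xi xj.
Proof. by move=> H0; rewrite divr_ge0 ?powR_ge0. Qed.

Lemma cs_weight_ge_powR H beta xi xj (P s : R) : 0 <= H -> 0 <= beta -> 0 <= P -> 1 <= s ->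
  sqnorm3 (xi - xj) <= P * s ^+ 2 ->
  H / (1 + P) `^ beta * s `^ (- (2 * beta)) <= cs_weight H beta xi xj.
Proof.
move=> H0 beta0 P0 s1 dist_le.
have dist1 : 1 + sqnorm3 (xi - xj) <= s `^ 2 * (1 + P).
  by rewrite -[2]/(2%:R) powR_mulrn; nra.
have pos : 0 < 1 + sqnorm3 (xi - xj) by rewrite ltr_pwDl ?sqnorm3_ge0.
rewrite /cs_weight -mulrA ler_wpM2l // mulrC powRN -invfM lef_pV2 ?posrE ?powR_gt0 //.
  rewrite powRrM -powRM ?powR_ge0 //; last lra.
  by apply: ge0_ler_powR; rewrite ?nnegrE ?powR_ge0 //; lra.
by rewrite mulr_gt0 // powR_gt0 //; lra.
Qed.

End Weights.

Section Follower.
Context {R : realType} {I : finType}.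
Variables (L : I -> I -> bool) (H beta q C T0 : R).
Variables (x v : I -> R -> 'rV[R]_3) (vinf : 'rV[R]_3) (i j0 : I).
Hypotheses (H_gt0 : 0 < H) (beta_gt0 : 0 < beta) (beta_lt_half : beta < 2^-1).
Hypotheses (q_gt0 : 0 < q) (T0_ge0 : 0 <= T0) (Lij0 : L i j0).
Hypothesis leaders_decay : forall j, L i j -> forall t, T0 <= t ->
  enorm3 (v j t - vinf) <= C * (1 + t) `^ (- q).
Hypothesis dx : forall j t, T0 <= t -> is_derive t 1 (x j) (v j t).
Hypothesis dv : forall t, T0 <= t -> is_derive t 1 (v i)
  (\sum_(j | L i j) cs_weight H beta (x i t) (x j t) *: (v j t - v i t)).

Local Notation a j t := (cs_weight H beta (x i t) (x j t)).
Local Notation D t := (sqnorm3 (v i t - vinf)).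
Local Notation U j t := (sqnorm3 (v j t - vinf)).
Local Notation r := (2 * q).
Local Notation M := (C ^+ 2).
Local Notation dD t :=
  (2 * dot3 (v i t - vinf) (\sum_(j | L i j) a j t *: (v j t - v i t))).

Lemma follower_sqdist_is_derive t : T0 <= t -> is_derive t 1 (fun s => D s) (dD t).
Proof.
move=> T0t; apply: (is_derive_sqnorm3 (W := fun s => v i s - vinf)).
have dvi := dv T0t.
rewrite (_ : (fun s => _) = v i - cst vinf); last exact/funext.
by apply: is_derive_eq; rewrite subr0.
Qed.

Lemma follower_sqdist_derive_le t : dD t <= \sum_(j | L i j) a j t * (U j t - D t).
Proof.
rewrite dot3_sumZr mulr_sumr; apply: ler_sum => j _.
rewrite mulrCA; apply: ler_wpM2l; first exact: cs_weight_ge0 (ltW H_gt0).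
have -> : v j t - v i t = (v j t - vinf) - (v i t - vinf) by rewrite opprB addrA subrK.
exact: sqnorm3_tangent_le.
Qed.

Lemma follower_sqdist_derive_le_leader t B :
  (forall j, L i j -> U j t <= B) -> B < D t -> dD t <= a j0 t * (U j0 t - D t).
Proof.
move=> UB BD; apply: le_trans (follower_sqdist_derive_le t) _.
rewrite (bigD1 j0) //= gerDl; apply: sumr_le0 => j /andP[Lj _].
apply: mulr_ge0_le0; first exact: cs_weight_ge0 (ltW H_gt0).
by rewrite subr_le0 (le_trans (UB j Lj)) // ltW.
Qed.

Lemma leaders_sqdist_decay j t : L i j -> T0 <= t -> U j t <= M * (1 + t) `^ (- r).
Proof.
move=> Lj T0t; apply: le_trans (sqnorm3_le_sqr (leaders_decay Lj T0t)) _.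
by rewrite exprMn sqr_powR -?mulrN //; have := T0_ge0; lra.
Qed.

Lemma leaders_sqdist_le j t : L i j -> T0 <= t -> U j t <= M.
Proof.
move=> Lj T0t; apply: le_trans (leaders_sqdist_decay Lj T0t) _.
have t1 : 1 <= 1 + t by have := T0_ge0; lra.
have e0 : 0 < (1 + t) `^ (- r) by apply: powR_gt0; lra.
have e1 : (1 + t) `^ (- r) <= 1.
  by rewrite -[leRHS](powRr0 (1 + t)); apply: ler_powR => //; have := q_gt0; lra.
by rewrite ler_piMr // sqr_ge0.
Qed.

Lemma follower_sqdist_bounded : exists K, forall t, T0 <= t -> D t <= K.
Proof.
pose K := Num.max (D T0) M; exists K => t T0t; rewrite -subr_le0.
apply: (nonpos_barrier (phi := fun s => D s - K) (dphi := fun s => dD s)) T0t.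
- move=> s T0s; have dDs := follower_sqdist_is_derive T0s.
  rewrite (_ : (fun s => D s - K) = (fun s => D s) - cst K); last exact/funext.
  by apply: is_derive_eq; rewrite subr0.
- by rewrite subr_le0 le_max lexx.
- move=> s T0s; rewrite subr_gt0 => KD.
  have UK j : L i j -> U j s <= K.
    by move=> Lj; rewrite le_max (leaders_sqdist_le Lj T0s) orbT.
  apply: le_trans (follower_sqdist_derive_le_leader UK KD) _.
  apply: mulr_ge0_le0; first exact: cs_weight_ge0 (ltW H_gt0).
  by rewrite subr_le0 (le_trans (UK _ Lij0)) // ltW.
Qed.

Lemma follower_leader_velocity_gap_bounded :
  exists V, forall t c, T0 <= t -> `|(v i t - v j0 t) 0 c| <= V.
Proof.
have [K DK] := follower_sqdist_bounded.
exists (Num.sqrt K + Num.sqrt M) => t c T0t.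
have -> : (v i t - v j0 t) 0 c = (v i t - vinf) 0 c - (v j0 t - vinf) 0 c.
  by rewrite !mxE; ring.
apply: le_trans (ler_normB _ _) _; apply: lerD.
  exact: normr_coord_le_sqrt (DK t T0t).
exact: normr_coord_le_sqrt (leaders_sqdist_le Lij0 T0t).
Qed.

Lemma follower_leader_distance_quadratic :
  exists2 P, 0 <= P & forall t, T0 <= t -> sqnorm3 (x i t - x j0 t) <= P * (1 + t) ^+ 2.
Proof.
have [V gapV] := follower_leader_velocity_gap_bounded.
have V0 : 0 <= V := le_trans (normr_ge0 _) (gapV T0 0 (lexx T0)).
pose E0 := enorm3 (x i T0 - x j0 T0).
have E00 : 0 <= E0 := sqrtr_ge0 _.
exists (3 * (E0 + V) ^+ 2) => [|t T0t]; first by rewrite mulr_ge0 ?sqr_ge0.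
rewrite -mulrA -exprMn; apply: sqnorm3_le_coord => c.
have dgap s : T0 <= s ->
    is_derive s 1 (fun u => (x i u - x j0 u) 0 c) ((v i s - v j0 s) 0 c).
  move=> T0s; have dxi := dx i T0s; have dxj0 := dx j0 T0s.
  exact: (is_derive_coord (M := x i - x j0)).
have lip := is_derive_bounded_lipschitz dgap (fun s T0s => gapV s c T0s) T0t.
have init : `|(x i T0 - x j0 T0) 0 c| <= E0 := normr_coord_le_enorm3 _ c.
have := ler_normB ((x i t - x j0 t) 0 c - (x i T0 - x j0 T0) 0 c)
  (- (x i T0 - x j0 T0) 0 c).
rewrite opprK subrK normrN => tri.
have := T0_ge0; nra.
Qed.

Lemma follower_weight_lower_bound :
  exists2 T, T0 <= T & forall t, T <= t -> 2 * r / (1 + t) <= a j0 t.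
Proof.
have [P P0 distP] := follower_leader_distance_quadratic.
pose c0 := H / (1 + P) `^ beta.
have c0_gt0 : 0 < c0 by rewrite divr_gt0 // powR_gt0 //; lra.
have [T T_ge0 growth] : exists2 T, 0 <= T &
    forall t, T <= t -> 2 * r / c0 <= (1 + t) `^ (1 - 2 * beta).
  by apply: powR_shift_unbounded; have := beta_lt_half; lra.
exists (Num.max T0 T) => [|t]; first by rewrite le_max lexx.
rewrite ge_max => /andP[T0t Tt].
have t1 : 1 <= 1 + t by have := T0_ge0; lra.
have := cs_weight_ge_powR (ltW H_gt0) (ltW beta_gt0) P0 t1 (distP t T0t).
apply: le_trans; rewrite -/c0.
have -> : - (2 * beta) = (1 - 2 * beta) - 1 by ring.
rewrite powRB ?(gt_eqF (lt_le_trans ltr01 t1)) ?implybT // powRr1 ?(le_trans ler01 t1) //.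
rewrite [leRHS]mulrA; apply: ler_wpM2r; first by rewrite invr_ge0 (le_trans ler01 t1).
by rewrite -ler_pdivrMl // mulrC growth.
Qed.

Lemma follower_sqdist_derive_le_decay s M' : T0 <= s -> 2 * r / (1 + s) <= a j0 s ->
  2 * M <= M' -> M' * (1 + s) `^ (- r) < D s ->
  dD s <= M' * (- r * ((1 + s) `^ (- r) / (1 + s))).
Proof.
move=> T0s weight_ge MM' DM'.
have s1 : 0 < 1 + s by have := T0_ge0; lra.
have UB j : L i j -> U j s <= M * (1 + s) `^ (- r).
  by move=> Lj; have := leaders_sqdist_decay Lj T0s.
set e := (1 + s) `^ (- r) in DM' UB *.
have e0 : 0 < e by apply: powR_gt0.
have M0 : 0 <= M := sqr_ge0 C.
have MeD : M * e < D s.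
  by apply: le_lt_trans DM'; apply: ler_wpM2r; [exact: ltW | lra].
have gap : U j0 s - D s <= - (M' * e / 2).
  by have := UB j0 Lij0; have := ler_wpM2r (ltW e0) MM'; lra.
apply: le_trans (follower_sqdist_derive_le_leader UB MeD) _.
have -> : M' * (- r * (e / (1 + s))) = 2 * r / (1 + s) * - (M' * e / 2).
  by field; rewrite gt_eqF.
apply: le_trans (_ : _ <= a j0 s * - (M' * e / 2)) _.
  by apply: ler_wpM2l gap; exact: cs_weight_ge0 (ltW H_gt0).
by apply: ler_wnM2r weight_ge; rewrite oppr_le0 divr_ge0 ?mulr_ge0 ?(ltW e0) //; lra.
Qed.

Lemma follower_sqdist_decay :
  exists M' T', T0 <= T' /\ forall t, T' <= t -> D t <= M' * (1 + t) `^ (- r).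
Proof.
have [T T0T weight_ge] := follower_weight_lower_bound.
have T_ge0 : 0 <= T by have := T0_ge0; lra.
(* [M' >= 2 M] makes the leader term of [D'] strong enough; the second summand
   puts [D] below the barrier at time [T]. *)
pose M' := 2 * M + D T * (1 + T) `^ r.
have MM' : 2 * M <= M' by rewrite lerDl mulr_ge0 ?sqnorm3_ge0 ?powR_ge0.
exists M', T; split => // t Tt; rewrite -subr_le0.
apply: (nonpos_barrier (phi := fun s => D s - M' * (1 + s) `^ (- r))
  (dphi := fun s => dD s - M' * (- r * (1 + s) `^ (- r - 1)))) Tt.
- move=> s Ts; have dDs := follower_sqdist_is_derive (le_trans T0T Ts).
  have dpow := is_derive_powR_shift (- r) (t := s) ltac:(lra).
  rewrite (_ : (fun s => _) = (fun s => D s) - M' *: (fun s => (1 + s) `^ (- r))).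
    exact: is_derive_eq.
  exact/funext.
- have T1 : 0 < (1 + T) `^ r by apply: powR_gt0; lra.
  rewrite subr_le0 mulrDl powRN mulfK ?gt_eqF // lerDr.
  by rewrite divr_ge0 ?powR_ge0 // mulr_ge0 ?sqr_ge0.
- move=> s Ts; rewrite subr_gt0 subr_le0 => DM'.
  have s1 : 0 < 1 + s by lra.
  have -> : (1 + s) `^ (- r - 1) = (1 + s) `^ (- r) / (1 + s).
    by rewrite powRB ?powRr1 ?(ltW s1) // (gt_eqF s1) implybT.
  exact: follower_sqdist_derive_le_decay (le_trans T0T Ts) (weight_ge s Ts) MM' DM'.
Qed.

Lemma follower_velocity_decay : exists C' T', T0 <= T' /\
  forall t, T' <= t -> enorm3 (v i t - vinf) <= C' * (1 + t) `^ (- q).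
Proof.
have [M' [T' [T0T' decay]]] := follower_sqdist_decay.
exists (Num.sqrt M'), T'; split => // t T't.
have t0 : 0 < 1 + t by have := T0_ge0; lra.
have M'0 : 0 <= M'.
  by have := le_trans (sqnorm3_ge0 _) (decay t T't); rewrite pmulr_lge0 // powR_gt0.
apply: le_trans (enorm3_le_sqrt (decay t T't)) _.
by rewrite sqrtrM // -mulrN sqrt_powR_double // ltW.
Qed.

End Follower.

Lemma relative_positions_converge {R : realType} (I : finType)
    (x v : I -> R -> 'rV[R]_3) (vinf : 'rV[R]_3) (C q p T : R) :
  0 <= T -> 0 < p -> p <= q - 1 ->
  (forall j t, T <= t -> is_derive t 1 (x j) (v j t)) ->
  (forall j t, T <= t -> enorm3 (v j t - vinf) <= C * (1 + t) `^ (- q)) ->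
  exists d : I -> I -> 'rV[R]_3,
    (forall i j, (fun t => x i t - x j t) @ +oo --> d i j) /\
    (exists K T', forall t, T' <= t -> forall i j,
       enorm3 (x i t - x j t - d i j) <= K * (1 + t) `^ (- p)).
Proof.
move=> T0 p0 pq dx vdecay.
pose K := 2 * (4 * C / (q - 1)).
have pair_limit i j : exists dij, forall t, T <= t ->
    enorm3 (x i t - x j t - dij) <= K * (1 + t) `^ (- p).
  have C0 : 0 <= C.
    have := le_trans (sqrtr_ge0 _) (vdecay i T (lexx T)).
    by rewrite pmulr_lge0 // powR_gt0 //; lra.
  have [dij rate] : exists dij, forall t, T <= t ->
      enorm3 (x i t - x j t - dij) <= K * (1 + t) `^ (1 - q).
    apply: (is_derive_decay_limit3 (dw := fun t => v i t - v j t))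
      => [||t Tt|t Tt]; try lra.
      by have dxi := dx i t Tt; have dxj := dx j t Tt; exact: is_deriveB.
    have -> : v i t - v j t = (v i t - vinf) - (v j t - vinf) by rewrite opprB addrA subrK.
    apply: le_trans (enorm3_sub_le _ _) _.
    by have := vdecay i t Tt; have := vdecay j t Tt; lra.
  exists dij => t Tt; apply: le_trans (rate t Tt) _; apply: ler_wpM2l; first by rewrite /K mulr_ge0 // divr_ge0 ?mulr_ge0 //; lra.
  by apply: ler_powR; lra.
have [d dP] := fin_all_exists (fun i => fin_all_exists (pair_limit i)).
exists d; split; last by exists K, T => t Tt i j; exact: dP.
move=> i j; apply: (powR_rate_cvg (K := K) (q := p) (T := T)) => // t Tt.
exact: le_trans (normr_le_enorm3 _) (dP i j t Tt).
Qed.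

Lemma hierarchy_velocity_decay {R : realType} n (L : 'I_n.+1 -> 'I_n.+1 -> bool)
    (H beta q C0 T0 : R) (x v : 'I_n.+1 -> R -> 'rV[R]_3) (vinf : 'rV[R]_3) :
  hierarchical_leadership L -> 0 < H -> 0 < beta -> beta < 2^-1 -> 0 < q -> 0 <= T0 ->
  (forall t, T0 <= t -> enorm3 (v ord0 t - vinf) <= C0 * (1 + t) `^ (- q)) ->
  (forall j t, T0 <= t -> is_derive t 1 (x j) (v j t)) ->
  (forall (i : 'I_n.+1) t, (0 < i)%N -> T0 <= t -> is_derive t 1 (v i)
     (\sum_(j | L i j) cs_weight H beta (x i t) (x j t) *: (v j t - v i t))) ->
  exists C T, T0 <= T /\
    forall j t, T <= t -> enorm3 (v j t - vinf) <= C * (1 + t) `^ (- q).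
Proof.
move=> [below nonempty] H0 beta0 beta_half q0 T00 leader dx dv.
suff prefix m : exists C T, T0 <= T /\ forall j : 'I_n.+1, (j < m)%N ->
    forall t, T <= t -> enorm3 (v j t - vinf) <= C * (1 + t) `^ (- q).
  by have [C [T [T0T decay]]] := prefix n.+1; exists C, T; split => // j; apply: decay.
elim: m => [|m [C [T [T0T decay]]]]; first by exists 0, T0; split.
have [m_big|m_lt] := leqP n.+1 m.
  by exists C, T; split => // j jm; apply: decay; rewrite (leq_trans (ltn_ord j)).
pose i := Ordinal m_lt.
have [Ci [Ti [TTi decay_i]]] : exists Ci Ti, T <= Ti /\
    forall t, Ti <= t -> enorm3 (v i t - vinf) <= Ci * (1 + t) `^ (- q).
  have [m0|m_gt0] := posnP m.
    exists C0, T; split => // t Tt; rewrite (_ : i = ord0); last exact: val_inj.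
    exact/leader/(le_trans T0T).
  have [j0 Lij0] := nonempty i m_gt0.
  apply: (follower_velocity_decay (L := L) (H := H) (beta := beta) (C := C) (x := x)
    (j0 := j0)) => //; first by apply: le_trans T0T.
  - by move=> j Lij t Tt; apply: decay (below _ _ Lij) _ _.
  - by move=> j t Tt; apply: dx (le_trans T0T Tt).
  - by move=> t Tt; apply: dv (le_trans T0T Tt).
exists (Num.max C Ci), Ti; split; first exact: le_trans TTi.
move=> j; rewrite ltnS leq_eqVlt => /predU1P[jm | jm] t Tit.
  rewrite (_ : j = i); last exact: val_inj.
  by apply: le_trans (decay_i t Tit) _; rewrite ler_wpM2r ?powR_ge0 // le_max lexx orbT.
apply: le_trans (decay j jm t (le_trans TTi Tit)) _.
by rewrite ler_wpM2r ?powR_ge0 // le_max lexx.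
Qed.

Theorem corollary2 (R : realType) (k : nat) (L : 'I_k.+1 -> 'I_k.+1 -> bool)
  (H beta mu : R) (x v : 'I_k.+1 -> R -> 'rV[R]_3) (f : R -> 'rV[R]_3) :
  hierarchical_leadership L ->
  0 < H -> 0 < beta -> beta < 2^-1 ->
  (k.+1)%:R < mu ->
  (exists C T : R, forall t : R, T <= t -> enorm3 (f t) <= C * (1 + t) `^ (- mu)) ->
  (forall i (t : R), 0 < t -> is_derive t 1 (x i) (v i t)) ->
  (forall t : R, 0 < t -> is_derive t 1 (v ord0) (f t)) ->
  (forall (i : 'I_k.+1) (t : R), (0 < i)%N -> 0 < t ->
     is_derive t 1 (v i)
       (\sum_(j < k.+1 | L i j) cs_weight H beta (x i t) (x j t) *: (v j t - v i t))) ->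
  exists d : 'I_k.+1 -> 'I_k.+1 -> 'rV[R]_3,
    (forall i j, (fun t : R => x i t - x j t) @ +oo%R --> d i j) /\
    (exists C T : R, forall t : R, T <= t -> forall i j,
       enorm3 (x i t - x j t - d i j) <= C * (1 + t) `^ (- (mu - (k.+1)%:R))).
Proof.
move=> hL H0 beta0 beta_half mu_gt [Cf [Tf f_decay]] dx dv0 dv.
case: k => [|k] in L x v hL mu_gt dx dv0 dv *.
  exists (fun _ _ => 0); split => [i j|].
    rewrite (ord1 i) (ord1 j) (_ : (fun t => _) = cst 0); first exact: cvg_cst.
    by apply/funext => t; rewrite subrr.
  exists 0, 0 => t _ i j; rewrite (ord1 i) (ord1 j) !subrr mul0r.
  by rewrite /enorm3 /sqnorm3 big1 ?sqrtr0 // => c _; rewrite mxE expr0n.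
have k2 : 2%:R <= k.+2%:R :> R by rewrite ler_nat.
have [T0 T0_ge1 Tf_T0] : exists2 T0, 1 <= T0 & Tf <= T0.
  by exists (Num.max 1 Tf); rewrite le_max lexx ?orbT.
have [vinf leader] : exists vinf, forall t, T0 <= t ->
    enorm3 (v ord0 t - vinf) <= 2 * (Cf / (mu - 1)) * (1 + t) `^ (- (mu - 1)).
  rewrite opprB; apply: is_derive_decay_limit3 => [||t T0t|t T0t]; try lra.
    by apply: dv0; lra.
  by apply: f_decay; lra.
have [Cv [T [T0T vdecay]]] : exists C T, T0 <= T /\ forall j t, T <= t ->
    enorm3 (v j t - vinf) <= C * (1 + t) `^ (- (mu - 1)).
  apply: (hierarchy_velocity_decay (x := x) hL H0 beta0 beta_half _ _ leader); try lra.
    by move=> j t T0t; apply: dx; lra.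
  by move=> i t i0 T0t; apply: dv => //; lra.
apply: (relative_positions_converge (q := mu - 1) (T := T) _ _ _ _ vdecay); try lra.
by move=> j t Tt; apply: dx; lra.
Qed.
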